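(* Let $S_1>0$ and $t>1$, and set $f(S_1)=(t-1)\big(1+(t+1)S_1\big)$. With $R_{DF},R_{CF}$ as defined in the context, for every $S_2\ge 0$: if $S_2>f(S_1)$ then $R_{CF}(S_2)>R_{DF}(S_2)$, and if $S_2\le f(S_1)$ then $R_{DF}(S_2)\ge R_{CF}(S_2)$. Consequently $\max\{R_{DF}(S_2),R_{CF}(S_2)\}$ equals $R_{DF}(S_2)$ for $S_2\le f(S_1)$ and $R_{CF}(S_2)$ for $S_2>f(S_1)$.
   Context: $C(x)=\log_2(1+x)$. For fixed $S_1>0$, $t>0$ and $S_2\ge0$, $$R_{DF}(S_2)=\frac12\max_{0\le\rho\le1}\min\Big\{C(tS_1)+C\big((1-\rho^2)S_1\big),\;C(S_1)+C\big(S_1+S_2+2\rho\sqrt{S_1S_2}\big)\Big\},$$ $$R_{CF}(S_2)=\frac12C(S_1)+\frac12C\Big(S_1+\frac{tS_1S_2}{1+(t+1)S_1+S_2}\Big).$$ These are the DF and CF rates of a half-duplex Gaussian relay channel with source–destination SNR $S_1$, source–relay/source–destination gain ratio $t$, and relay–destination SNR $S_2$. *)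

From Stdlib Require Import Reals Lra Classical ClassicalEpsilon.
Open Scope R_scope.

Definition Cap (x : R) : R := ln (1 + x) / ln 2.

Definition DF_obj (S1 t S2 rho : R) : R :=
  Rmin (Cap (t * S1) + Cap ((1 - rho ^ 2) * S1))
       (Cap S1 + Cap (S1 + S2 + 2 * rho * sqrt (S1 * S2))).

Definition is_max_DF (S1 t S2 r : R) : Prop :=
  (exists rho, 0 <= rho <= 1 /\ DF_obj S1 t S2 rho = r) /\
  (forall rho, 0 <= rho <= 1 -> DF_obj S1 t S2 rho <= r).

(* max_{0<=rho<=1} DF_obj, chosen by Hilbert's epsilon (the maximum exists
   since DF_obj is continuous in rho on the compact interval [0,1]). *)
Definition max_DF (S1 t S2 : R) : R :=
  epsilon (inhabits 0) (fun r => is_max_DF S1 t S2 r).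

Definition R_DF (S1 t S2 : R) : R := / 2 * max_DF S1 t S2.

Definition R_CF (S1 t S2 : R) : R :=
  / 2 * Cap S1 + / 2 * Cap (S1 + t * S1 * S2 / (1 + (t + 1) * S1 + S2)).

Definition f_thr (S1 t : R) : R := (t - 1) * (1 + (t + 1) * S1).

(** Write [x] for the effective SNR inside the second term of [R_CF], so that
    [R_CF = (C(S1) + C(x))/2].  The relay-cut term of the DF objective never
    exceeds [C(t S1) + C(S1)], and at [rho = 0] the objective equals
    [min (C(t S1) + C(S1)) (C(S1) + C(S1 + S2))].  Since always [x <= S1 + S2],
    and [t S1 - x = S1 (f(S1) - S2) / (1 + (t+1) S1 + S2)], the comparison of
    the two rates reduces to the monotonicity of [C] and the sign of
    [f(S1) - S2]. *)

From Stdlib Require Import Reals Lra ClassicalEpsilon.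
From Coquelicot Require Import Coquelicot.
Open Scope R_scope.

Lemma Rmin_abs (a b : R) : Rmin a b = (a + b - Rabs (a - b)) / 2.
Proof.
  unfold Rmin; destruct (Rle_dec a b).
  - rewrite Rabs_left1; lra.
  - rewrite Rabs_right; lra.
Qed.

Lemma continuity_pt_Rmin (f g : R -> R) (x : R) :
  continuity_pt f x -> continuity_pt g x ->
  continuity_pt (fun y => Rmin (f y) (g y)) x.
Proof.
  intros Hf Hg.
  apply continuity_pt_ext with
    (f := fun y => (f y + g y - Rabs (f y - g y)) * / 2).
  { intros y; rewrite Rmin_abs; reflexivity. }
  apply (continuity_pt_mult _ (fun _ => / 2)).
  - apply (continuity_pt_minus (fun y => f y + g y) (fun y => Rabs (f y - g y))).
    + now apply continuity_pt_plus.
    + apply (continuity_pt_comp (fun y => f y - g y) Rabs).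
      * now apply continuity_pt_minus.
      * apply Rcontinuity_abs.
  - now apply continuity_pt_const.
Qed.

Lemma continuity_pt_ex_derive (f : R -> R) (x : R) :
  ex_derive f x -> continuity_pt f x.
Proof. intros H; apply continuity_pt_filterlim, (ex_derive_continuous f x H). Qed.

Lemma Cap_le (a b : R) : -1 < a -> a <= b -> Cap a <= Cap b.
Proof.
  intros Ha Hab; unfold Cap, Rdiv.
  apply Rmult_le_compat_r.
  - left; apply Rinv_0_lt_compat; pose proof ln_lt_2; lra.
  - apply ln_le; lra.
Qed.

Lemma Cap_lt (a b : R) : -1 < a -> a < b -> Cap a < Cap b.
Proof.
  intros Ha Hab; unfold Cap, Rdiv.
  apply Rmult_lt_compat_r.
  - apply Rinv_0_lt_compat; pose proof ln_lt_2; lra.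
  - apply ln_increasing; lra.
Qed.

Definition cf_snr (S1 t S2 : R) : R := S1 + t * S1 * S2 / (1 + (t + 1) * S1 + S2).

Lemma R_CF_cf_snr (S1 t S2 : R) : R_CF S1 t S2 = / 2 * (Cap S1 + Cap (cf_snr S1 t S2)).
Proof. unfold R_CF, cf_snr; ring. Qed.

Section Rates.

Variables S1 t S2 : R.
Hypothesis hS1 : 0 < S1.
Hypothesis ht : 0 < t.
Hypothesis hS2 : 0 <= S2.

Let D := 1 + (t + 1) * S1 + S2.

Lemma denom_pos : 0 < D.
Proof. unfold D; nra. Qed.

Lemma S1_le_cf_snr : S1 <= cf_snr S1 t S2.
Proof.
  pose proof denom_pos.
  assert (0 <= t * S1) by nra.
  assert (0 <= t * S1 * S2 / D) by (apply Rdiv_le_0_compat; nra).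
  unfold cf_snr; fold D; lra.
Qed.

Lemma cf_snr_le_sum : cf_snr S1 t S2 <= S1 + S2.
Proof.
  pose proof denom_pos.
  assert (E : S1 + S2 - cf_snr S1 t S2 = S2 * (1 + S1 + S2) / D).
  { unfold cf_snr; fold D.
    replace (1 + S1 + S2) with (D - t * S1) by (unfold D; ring).
    field; lra. }
  assert (0 <= S2 * (1 + S1 + S2) / D) by (apply Rdiv_le_0_compat; nra).
  lra.
Qed.

Lemma relay_snr_sub_cf_snr :
  t * S1 - cf_snr S1 t S2 = S1 * (f_thr S1 t - S2) / D.
Proof.
  pose proof denom_pos.
  replace (f_thr S1 t - S2) with ((t - 1) * D - t * S2) by (unfold f_thr, D; ring).
  unfold cf_snr; fold D; field; lra.
Qed.

Lemma relay_snr_lt_cf_snr : f_thr S1 t < S2 -> t * S1 < cf_snr S1 t S2.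
Proof.
  intros Hf; pose proof denom_pos; pose proof relay_snr_sub_cf_snr.
  assert (S1 * (f_thr S1 t - S2) / D < 0).
  { apply Rdiv_neg_pos; [nra | lra]. }
  lra.
Qed.

Lemma cf_snr_le_relay_snr : S2 <= f_thr S1 t -> cf_snr S1 t S2 <= t * S1.
Proof.
  intros Hf; pose proof denom_pos; pose proof relay_snr_sub_cf_snr.
  assert (0 <= S1 * (f_thr S1 t - S2) / D) by (apply Rdiv_le_0_compat; nra).
  lra.
Qed.

Lemma DF_obj_continuous (rho : R) :
  0 <= rho <= 1 -> continuity_pt (DF_obj S1 t S2) rho.
Proof.
  intros Hrho; pose proof (sqrt_pos (S1 * S2)).
  assert (rho ^ 2 <= 1) by nra.
  apply continuity_pt_Rmin; apply continuity_pt_ex_derive; unfold Cap.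
  - auto_derive; nra.
  - auto_derive; nra.
Qed.

Lemma is_max_DF_max_DF : is_max_DF S1 t S2 (max_DF S1 t S2).
Proof.
  unfold max_DF; apply epsilon_spec.
  destruct (continuity_ab_maj (DF_obj S1 t S2) 0 1) as [M [HM HMr]].
  - lra.
  - exact DF_obj_continuous.
  - exists (DF_obj S1 t S2 M); split; [exists M; split; auto | exact HM].
Qed.

Lemma DF_obj_le_relay_cut (rho : R) :
  0 <= rho <= 1 -> DF_obj S1 t S2 rho <= Cap (t * S1) + Cap S1.
Proof.
  intros Hrho; unfold DF_obj.
  assert (0 <= rho ^ 2 <= 1) by (split; nra).
  assert (Cap ((1 - rho ^ 2) * S1) <= Cap S1) by (apply Cap_le; nra).
  pose proof (Rmin_l (Cap (t * S1) + Cap ((1 - rho ^ 2) * S1))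
                     (Cap S1 + Cap (S1 + S2 + 2 * rho * sqrt (S1 * S2)))).
  lra.
Qed.

Lemma DF_obj_0 :
  DF_obj S1 t S2 0 = Rmin (Cap (t * S1) + Cap S1) (Cap S1 + Cap (S1 + S2)).
Proof.
  unfold DF_obj.
  replace ((1 - 0 ^ 2) * S1) with S1 by ring.
  replace (S1 + S2 + 2 * 0 * sqrt (S1 * S2)) with (S1 + S2) by ring.
  reflexivity.
Qed.

Lemma R_DF_le_relay_cut : R_DF S1 t S2 <= / 2 * (Cap (t * S1) + Cap S1).
Proof.
  unfold R_DF; destruct is_max_DF_max_DF as [[rho [Hrho <-]] _].
  pose proof (DF_obj_le_relay_cut rho Hrho); lra.
Qed.

Lemma R_DF_ge_DF_obj_0 : / 2 * DF_obj S1 t S2 0 <= R_DF S1 t S2.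
Proof.
  destruct is_max_DF_max_DF as [_ Hub].
  unfold R_DF; pose proof (Hub 0 ltac:(lra)); lra.
Qed.

Lemma R_CF_gt_R_DF : f_thr S1 t < S2 -> R_DF S1 t S2 < R_CF S1 t S2.
Proof.
  intros Hf.
  assert (Cap (t * S1) < Cap (cf_snr S1 t S2))
    by (apply Cap_lt; [nra | exact (relay_snr_lt_cf_snr Hf)]).
  pose proof R_DF_le_relay_cut; rewrite R_CF_cf_snr; lra.
Qed.

Lemma R_DF_ge_R_CF : S2 <= f_thr S1 t -> R_CF S1 t S2 <= R_DF S1 t S2.
Proof.
  intros Hf.
  pose proof S1_le_cf_snr.
  assert (Cap (cf_snr S1 t S2) <= Cap (t * S1))
    by (apply Cap_le; [lra | exact (cf_snr_le_relay_snr Hf)]).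
  assert (Cap (cf_snr S1 t S2) <= Cap (S1 + S2))
    by (apply Cap_le; [lra | exact cf_snr_le_sum]).
  assert (Cap S1 + Cap (cf_snr S1 t S2) <= DF_obj S1 t S2 0)
    by (rewrite DF_obj_0; apply Rmin_glb; lra).
  pose proof R_DF_ge_DF_obj_0; rewrite R_CF_cf_snr; lra.
Qed.

End Rates.

Theorem mainTheorem3 (S1 t : R) (hS1 : 0 < S1) (ht : 1 < t) :
  forall S2 : R, 0 <= S2 ->
    (S2 > f_thr S1 t -> R_CF S1 t S2 > R_DF S1 t S2) /\
    (S2 <= f_thr S1 t -> R_DF S1 t S2 >= R_CF S1 t S2) /\
    (S2 <= f_thr S1 t -> Rmax (R_DF S1 t S2) (R_CF S1 t S2) = R_DF S1 t S2) /\
    (S2 > f_thr S1 t -> Rmax (R_DF S1 t S2) (R_CF S1 t S2) = R_CF S1 t S2).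
Proof.
  intros S2 hS2.
  assert (ht0 : 0 < t) by lra.
  pose proof (R_CF_gt_R_DF S1 t S2 hS1 ht0 hS2) as Hcf.
  pose proof (R_DF_ge_R_CF S1 t S2 hS1 ht0 hS2) as Hdf.
  repeat split; intros Hf.
  - now apply Hcf.
  - now apply Rle_ge, Hdf.
  - now apply Rmax_left, Hdf.
  - now apply Rmax_right, Rlt_le, Hcf.
Qed.
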